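(* Let $G$ be an f-closed and splittable query graph, and let $u,v\in V(G)$. Suppose $P_A$ and $P_B$ are two distinct directed simple paths from $u$ to $v$ such that no vertex of $P_A$ other than $u,v$ lies in the same strongly connected component as a vertex of $P_B$ other than $u,v$. Then $v\in u^{\oplus}$.
   Context: $G=G[Q]$ is the query graph of a Boolean CQ without self-joins with atoms $R(u,v)$, $u\ne v$, first attribute the key: vertices are variables, each atom gives an edge $e_R=(u_R,v_R)$ (parallel edges from different atoms allowed), consistent/inconsistent according to the type of $R$; $E^i$ = inconsistent edges. Paths may have zero edges. $x\to y$: a directed path with only consistent edges; $x\leadsto y$: any directed path; undirected paths ignore directions; for a path $P$ and vertex set $N$, $P\cap N$ is the set of vertices of $P$ in $N$. $u^{\oplus}=\{v:u\to v\}$, $u^+=\{v:u\leadsto v\}$, $u^{+,R}=\{v: u\leadsto v$ in $G-\{e_R\}\}$. For $R,S\in E^i$: $R\sim S$ iff $u_S\in u_R^+$ and $u_R\in u_S^+$; $[R]$ the class of $R$; $coupled^+(R)=[R]\cup\{S\in E^i:\exists$ undirected path $P$ from $v_R$ to $u_S$ with $P\cap u_R^{+,R}=\emptyset\}$; $G$ is splittable if there are no $R,S\in E^i$ with $R\in coupled^+(S)$, $S\in coupled^+(R)$ and $R\not\sim S$. $G$ is f-closed if for every $R\in E^i$, $v_R^{\oplus}\cap u_R^{+,R}\subseteq u_R^{\oplus}$. *)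

From mathcomp Require Import all_boot.
Set Implicit Arguments. Unset Strict Implicit. Unset Printing Implicit Defensive.

(* Query graph of a self-join-free Boolean CQ with binary atoms R(u,v), u <> v.
   Vertices = variables (V), edges = atoms (A); atom R gives the directed edge
   e_R = (src R, tgt R) = (u_R, v_R); parallel edges are allowed.
   [consistent R] is true iff the relation of R is consistent. *)
Record qgraph := QGraph {
  V : finType;
  A : finType;
  src : A -> V;
  tgt : A -> V;
  consistent : A -> bool;
  no_loop : forall a, src a != tgt a
}.

Section QG.
Variable G : qgraph.
Local Notation V := (V G).
Local Notation A := (A G).
Local Notation src := (@src G).
Local Notation tgt := (@tgt G).

Definition inconsistent (R : A) : bool := ~~ consistent R.

Definition adjE (ok : pred A) : rel V :=
  [rel x y | [exists e, [&& ok e, src e == x & tgt e == y]]].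

Definition reach (ok : pred A) (x y : V) : bool := connect (adjE ok) x y.

Definition dreach (x y : V) : bool := reach predT x y.
(* x -> y : directed path with only consistent edges;  u^oplus *)
Definition creach (x y : V) : bool := reach (fun e => consistent e) x y.
(* y in u^{+,R} : directed path in G - {e_R} *)
Definition reach_minus (R : A) (x y : V) : bool := reach (fun e => e != R) x y.

Definition equivR (R S : A) : bool :=
  [&& inconsistent R, inconsistent S, dreach (src R) (src S) & dreach (src S) (src R)].

Definition uadj (ok : pred V) : rel V :=
  [rel x y | [&& ok x, ok y &
     [exists e, ((src e == x) && (tgt e == y)) || ((tgt e == x) && (src e == y))]]].

Definition upath_in (ok : pred V) (x y : V) : bool :=
  [&& ok x, ok y & connect (uadj ok) x y].

(* S \in coupled^+(R) *)
Definition coupled (R S : A) : bool :=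
  equivR R S ||
  (inconsistent S &&
   upath_in (fun w => ~~ reach_minus R (src R) w) (tgt R) (src S)).

Definition splittable : Prop :=
  forall R S : A, inconsistent R -> inconsistent S ->
    coupled S R -> coupled R S -> equivR R S.

Definition f_closed : Prop :=
  forall R : A, inconsistent R ->
    forall w, creach (tgt R) w -> reach_minus R (src R) w -> creach (src R) w.

Fixpoint walk (x y : V) (p : seq A) : bool :=
  match p with
  | [::] => x == y
  | e :: p' => (src e == x) && walk (tgt e) y p'
  end.

Definition pverts (x : V) (p : seq A) : seq V := x :: map tgt p.

Definition dsimple (x y : V) (p : seq A) : bool :=
  walk x y p && uniq (pverts x p).

Definition same_scc (x y : V) : bool := dreach x y && dreach y x.

End QG.

From mathcomp Require Import all_boot.
Set Implicit Arguments. Unset Strict Implicit. Unset Printing Implicit Defensive.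

(* Proof of Lemma 5.12.  Suppose v is not in u^oplus.  Walking along each of
   the two u-v paths, the predicate "w -> v" is false at u and true at v, so
   each path has an edge where it flips: R on P_A and S on P_B, with
   u_R -/-> v, v_R -> v (hence R is inconsistent), and likewise for S.
   By f-closedness, no vertex from which v is reachable in G - {e_R} lies in
   u_R^{+,R} (the "barrier" lemma).  Since the paths share only u and v, R does
   not occur on P_B, so the tail of P_A from v_R to v followed by the reversed
   tail of P_B from u_S to v is an undirected path avoiding u_R^{+,R}: hence
   S in coupled^+(R), and symmetrically R in coupled^+(S).  Splittability gives
   R ~ S, i.e. u_R and u_S are in one strongly connected component; the
   barrier lemma also shows u_R, u_S differ from u and v, contradicting the
   hypothesis on the two paths. *)

Section QueryGraphPaths.
Variable G : qgraph.
Local Notation tgt := (@tgt G).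
Local Notation src := (@src G).
Implicit Types (x y w : V G) (e R S : A G) (p : seq (A G)).

Lemma reach_edge (ok : pred (A G)) e : ok e -> reach ok (src e) (tgt e).
Proof. by move=> he; apply: connect1; apply/existsP; exists e; rewrite he !eqxx. Qed.

Lemma walk_reach (ok : pred (A G)) x y p : walk x y p -> all ok p -> reach ok x y.
Proof.
elim: p x => [|e p IH] x /=; first by move=> /eqP-> _; exact: connect0.
case/andP=> /eqP <- hw /andP[he hp].
exact: connect_trans (reach_edge he) (IH _ hw hp).
Qed.

Lemma walk_cat x y p1 e p2 :
  walk x y (p1 ++ e :: p2) -> walk x (src e) p1 /\ walk (tgt e) y p2.
Proof.
elim: p1 x => [|e1 p1 IH] x /=; first by case/andP=> /eqP-> ->; rewrite eqxx.
by case/andP=> -> /IH[-> ->].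
Qed.

Lemma walk_src x y p e : walk x y p -> e \in p -> src e \in pverts x p.
Proof.
elim: p x => [|e1 p IH] x //= /andP[/eqP h1 hw].
rewrite in_cons => /orP[/eqP->|he]; first by rewrite h1 mem_head.
by have := IH _ hw he; rewrite /pverts /= !in_cons => ->; rewrite !orbT.
Qed.

Lemma walk_tgt x p e : e \in p -> tgt e \in pverts x p.
Proof. by move=> he; rewrite /pverts in_cons map_f ?orbT. Qed.

Lemma walk_last x y p : walk x y p -> y = last x (map tgt p).
Proof. by elim: p x => [|e p IH] x /=; [move/eqP | case/andP=> _ /IH]. Qed.

Lemma dsimple_edge x y p e :
  dsimple x y p -> e \in p -> src e = x -> tgt e = y -> p = [:: e].
Proof.
case: p => [|e0 p] //= /andP[/andP[/eqP h0 hw]].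
rewrite /pverts /= => /andP[hx hu].
rewrite in_cons => /orP[/eqP ee|he] hs ht.
- subst e; case: p hw hu hx => [//|e1 p] hw /andP[hu' _] _; exfalso.
  by move/negP: hu'; apply; rewrite ht (walk_last (p := e1 :: p) hw) /= mem_last.
- have := walk_src hw he; rewrite hs => hh.
  by move: hx; rewrite /pverts in hh; rewrite hh.
Qed.

Lemma walk_threshold (P : pred (V G)) x y p : walk x y p -> ~~ P x -> P y ->
  exists p1 e p2, [/\ p = p1 ++ e :: p2, ~~ P (src e) & P (tgt e)].
Proof.
elim: p x => [|e p IH] x /=; first by move=> /eqP-> /negbTE->.
case/andP=> /eqP hs hw hx hy.
case hP: (P (tgt e)); first by exists [::], e, p; rewrite hs hx.
have [p1 [e' [p2 [-> h1 h2]]]] := IH _ hw (negbT hP) hy.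
by exists (e :: p1), e', p2.
Qed.

Lemma uadj_sym (ok : pred (V G)) : symmetric (uadj ok).
Proof.
move=> x y; rewrite /uadj /= andbA [ok x && _]andbC -andbA.
congr (_ && (_ && _)); apply: eq_existsb => e /=.
by rewrite orbC; congr orb; apply: andbC.
Qed.

Lemma walk_uconnect (ok : pred (V G)) (okE : pred (A G)) x y p :
  walk x y p -> all okE p -> (forall w, reach okE w y -> ok w) ->
  connect (uadj ok) x y.
Proof.
elim: p x => [|e p IH] x /=; first by move=> /eqP-> _ _; rewrite connect0.
case/andP=> /eqP hs hw /andP[he hp] hok.
have ty := walk_reach hw hp.
apply: connect_trans (IH _ hw hp hok); apply: connect1.
have hx : ok x by apply: hok; rewrite -hs; apply: connect_trans (reach_edge he) ty.
rewrite /uadj /= hx hok //=.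
by apply/existsP; exists e; rewrite hs !eqxx.
Qed.

Lemma notin_all R p : R \notin p -> all (fun e => e != R) p.
Proof. by move=> h; apply/allP => e he; apply: contraNneq h => <-. Qed.

Lemma threshold_inconsistent v e :
  ~~ creach (src e) v -> creach (tgt e) v -> inconsistent e.
Proof.
move=> hn ht; apply/negP => hc; move/negP: hn; apply.
exact: connect_trans (reach_edge (ok := fun e => consistent e) hc) ht.
Qed.

Lemma f_closed_barrier v R :
  f_closed G -> ~~ creach (src R) v -> creach (tgt R) v ->
  forall w, reach_minus R w v -> ~~ reach_minus R (src R) w.
Proof.
move=> hf hRn hRt w hw; have hRi := threshold_inconsistent hRn hRt.
apply: contra hRn => hw2; exact: hf hRi v hRt (connect_trans hw2 hw).
Qed.

Lemma barrier_src_neq u v p R :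
  f_closed G -> ~~ creach (src R) v -> creach (tgt R) v ->
  walk u v p -> R \notin p -> src R != u.
Proof.
move=> hf hRn hRt wp Rp; apply/eqP => su.
have := f_closed_barrier hf hRn hRt (connect0 _ v).
by rewrite su /reach_minus (walk_reach wp (notin_all Rp)).
Qed.

Section TwoPaths.
Variables (u v : V G) (pA pB : seq (A G)).
Hypotheses (sA : dsimple u v pA) (sB : dsimple u v pB) (neqAB : pA != pB).
Hypothesis disj : forall x, x \in pverts u pA -> x \in pverts u pB ->
  (x == u) || (x == v).

Lemma edge_private R : R \in pA -> src R != v -> R \notin pB.
Proof.
move=> RA srcv; apply/negP => RB.
have /andP[wA _] := sA; have /andP[wB _] := sB.
have /orP[/eqP su|] := disj (walk_src wA RA) (walk_src wB RB);
  last by rewrite (negbTE srcv).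
have := disj (walk_tgt u RA) (walk_tgt u RB).
case/orP => /eqP tu; first by move: (no_loop R); rewrite su tu eqxx.
by move/negP: neqAB; apply; rewrite (dsimple_edge sA RA su tu) (dsimple_edge sB RB su tu).
Qed.

Lemma tail_avoids p1 R p2 : pA = p1 ++ R :: p2 -> R \notin p2.
Proof.
move=> eA; have /andP[wA uA] := sA.
have [w1 w2] : walk u (src R) p1 /\ walk (tgt R) v p2 by apply: walk_cat; rewrite -eA.
apply/negP => R2; move: uA; rewrite eA /pverts map_cat -cat_cons cat_uniq.
case/and3P=> _ /hasP[]; exists (src R); first by rewrite /= (walk_src w2 R2).
by rewrite (walk_last w1) mem_last.
Qed.

Lemma threshold_coupled p1 R p2 q1 S q2 :
  f_closed G ->
  pA = p1 ++ R :: p2 -> ~~ creach (src R) v -> creach (tgt R) v ->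
  pB = q1 ++ S :: q2 -> inconsistent S ->
  coupled R S /\ src R != u.
Proof.
move=> hf eA hRn hRt eB hSi.
have /andP[wA _] := sA; have /andP[wB _] := sB.
have srcv : src R != v by apply: contraNneq hRn => ->; apply: connect0.
have RA : R \in pA by rewrite eA mem_cat mem_head orbT.
have RnB := edge_private RA srcv.
split; last exact: barrier_src_neq hf hRn hRt wB RnB.
have key := f_closed_barrier hf hRn hRt.
have [_ w2] : walk u (src R) p1 /\ walk (tgt R) v p2 by apply: walk_cat; rewrite -eA.
have [_ w3] : walk u (src S) q1 /\ walk (tgt S) v q2 by apply: walk_cat; rewrite -eB.
have w3' : walk (src S) v (S :: q2) by rewrite /= eqxx.
have a2 := notin_all (tail_avoids eA).
have a3 : all (fun e => e != R) (S :: q2).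
  by apply: notin_all; apply: contra RnB; rewrite eB mem_cat => ->; rewrite orbT.
apply/orP; right; rewrite hSi /upath_in.
rewrite (key _ (walk_reach w2 a2)) (key _ (walk_reach w3' a3)) /=.
apply: connect_trans (walk_uconnect w2 a2 key) _.
by rewrite sym_connect_sym ?(walk_uconnect w3' a3 key) //; apply: uadj_sym.
Qed.

End TwoPaths.
End QueryGraphPaths.

Theorem lemma5p12 (G : qgraph) (u v : V G) (pA pB : seq (A G)) :
  f_closed G -> splittable G ->
  dsimple u v pA -> dsimple u v pB -> pA != pB ->
  (forall x y : V G, x \in pverts u pA -> y \in pverts u pB ->
     x != u -> x != v -> y != u -> y != v -> ~~ same_scc x y) ->
  creach u v.
Proof.
move=> hf hs hA hB hne hD; apply/idPn => hn.
have sccx (x : V G) : same_scc x x by rewrite /same_scc /dreach /reach connect0.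
have D x : x \in pverts u pA -> x \in pverts u pB -> (x == u) || (x == v).
  move=> hx hy; apply/idPn; rewrite negb_or => /andP[h1 h2].
  by move: (hD x x hx hy h1 h2 h1 h2); rewrite sccx.
have /andP[wA _] := hA; have /andP[wB _] := hB.
have vv : creach v v by apply: connect0.
have [p1 [R [p2 [eA hRn hRt]]]] := walk_threshold (P := fun w => creach w v) wA hn vv.
have [q1 [S [q2 [eB hSn hSt]]]] := walk_threshold (P := fun w => creach w v) wB hn vv.
have hRi := threshold_inconsistent hRn hRt.
have hSi := threshold_inconsistent hSn hSt.
have [cRS Ru] := threshold_coupled hA hB hne D hf eA hRn hRt eB hSi.
have [cSR Su] := threshold_coupled hB hA (contra_neq esym hne)
  (fun x hx hy => D x hy hx) hf eB hSn hSt eA hRi.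
have /and4P[_ _ d1 d2] := hs R S hRi hSi cSR cRS.
have Rv : src R != v by apply: contraNneq hRn => ->.
have Sv : src S != v by apply: contraNneq hSn => ->.
have RA : src R \in pverts u pA by apply: walk_src wA _; rewrite eA mem_cat mem_head orbT.
have SB : src S \in pverts u pB by apply: walk_src wB _; rewrite eB mem_cat mem_head orbT.
by move: (hD _ _ RA SB Ru Rv Su Sv); rewrite /same_scc d1 d2.
Qed.
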